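(* Let $p$ be a prime and $n\ge1$ an integer. Let $\widetilde G$ be the group generated by $\sigma_1,\dots,\sigma_{n+3}$ with $Z(\widetilde G)=[\widetilde G,\widetilde G]$ and relations $\sigma_i^{p}=1$ for $1\le i\le n+3$ and $[\sigma_i,\sigma_j]^{p}=1$ for $1\le i<j\le n+3$ (the Schur covering group of the elementary abelian group of order $p^{n+3}$). Let $H$ be the subgroup of $\widetilde G$ generated by $[\sigma_1,\sigma_2][\sigma_3,\sigma_4]$ and $[\sigma_1,\sigma_s][\sigma_{s+1},\sigma_{s+2}]$ for $3\le s\le n+1$ (so $H=\langle [\sigma_1,\sigma_2][\sigma_3,\sigma_4],[\sigma_1,\sigma_3][\sigma_4,\sigma_5],\dots,[\sigma_1,\sigma_{n+1}][\sigma_{n+2},\sigma_{n+3}]\rangle$, a central subgroup of order $p^n$). Let $G=\widetilde G/H$. Then $B_0(G)$ contains a subgroup isomorphic to $(\mathbf{Z}/p\mathbf{Z})^n$.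
   Context: Commutators are $[g,h]=ghg^{-1}h^{-1}$; $Z(\cdot)$ denotes the center. $\mathbf{Q}/\mathbf{Z}$ has trivial group action. A group is bicyclic if it is cyclic or a direct product of two cyclic groups. The Bogomolov multiplier of a finite group $G$ is $B_0(G)=\bigcap_A \operatorname{Ker}\{\operatorname{res}_G^A: H^2(G,\mathbf{Q}/\mathbf{Z})\to H^2(A,\mathbf{Q}/\mathbf{Z})\}$, $A$ running over all bicyclic subgroups of $G$. *)

From HB Require Import structures.
From mathcomp Require Import all_boot all_order all_algebra all_fingroup all_solvable.
Set Implicit Arguments. Unset Strict Implicit. Unset Printing Implicit Defensive.
Import GRing.Theory Num.Theory.

Section GroupDefs.
Local Open Scope group_scope.

Definition pcomm (gT : finGroupType) (g h : gT) : gT := g * h * g^-1 * h^-1.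

Definition bicyclic (gT : finGroupType) (A : {set gT}) : Prop :=
  cyclic A \/ exists B C : {group gT}, [/\ cyclic B, cyclic C & B \x C = A].

Definition gens_set (gT : finGroupType) (m : nat) (sigma : nat -> gT) : {set gT} :=
  [set sigma i.+1 | i : 'I_m].

(* The generators [s1,s2][s3,s4] and [s1,s_s][s_{s+1},s_{s+2}], 3 <= s <= n+1
   (written s = t+3 with t < n-1). *)
Definition H_gens (gT : finGroupType) (n : nat) (sigma : nat -> gT) : {set gT} :=
  (pcomm (sigma 1%N) (sigma 2%N) * pcomm (sigma 3%N) (sigma 4%N)) |:
  [set pcomm (sigma 1%N) (sigma (val t + 3)%N) * pcomm (sigma (val t + 4)%N) (sigma (val t + 5)%N)
     | t : 'I_(n.-1)].

Definition Hsub (gT : finGroupType) (n : nat) (sigma : nat -> gT) : {group gT} :=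
  <<H_gens n sigma>>%G.

End GroupDefs.

Section Cohomology.
Local Open Scope ring_scope.
(* Q/Z with trivial action: values are rationals, compared modulo Z. *)
Definition qz_zero (q : rat) : bool := q \is a Num.int.

Definition cocycle2 (aT : finGroupType) (G : {set aT}) (f : aT -> aT -> rat) : Prop :=
  forall x y z, x \in G -> y \in G -> z \in G ->
    qz_zero (f y z - f (x * y)%g z + f x (y * z)%g - f x y).

Definition coboundary2 (aT : finGroupType) (A : {set aT}) (f : aT -> aT -> rat) : Prop :=
  exists g : aT -> rat, forall x y, x \in A -> y \in A ->
    qz_zero (f x y - (g x + g y - g (x * y)%g)).

Definition in_B0 (aT : finGroupType) (G : {group aT}) (f : aT -> aT -> rat) : Prop :=
  cocycle2 G f /\
  forall A : {group aT}, A \subset G -> bicyclic A -> coboundary2 A f.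

(* B_0(G) contains a subgroup isomorphic to (Z/pZ)^n: there are n classes in B_0(G)
   killed by p and F_p-linearly independent in H^2(G,Q/Z). *)
Definition B0_contains_Zp_pow (aT : finGroupType) (G : {group aT}) (p n : nat) : Prop :=
  exists f : 'I_n -> aT -> aT -> rat,
    [/\ forall i, in_B0 G (f i),
        forall i, coboundary2 G (fun x y => p%:R * f i x y)
      & forall c : 'I_n -> nat,
          coboundary2 G (fun x y => \sum_(i < n) (c i)%:R * f i x y) ->
          forall i, (p %| c i)%N].
End Cohomology.

(* Map the Schur cover Gt to the group [heis] of pairs (v, A), v a row vector
   and A a matrix over F_p, by sigma_(j+1) |-> (e_j, 0): commutators become the
   alternating forms v /\ w, and H lands in a subspace [hspan] of them.  Let
   chi_i be the character of H reading the (0, i+1) entry; its transgression is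
   an explicit cocycle f_i on G = Gt / H killed by p.  If x and y commute in G,
   the commutator of their representatives lies in H, and the Plucker relations
   force the (0, i+1) entries of a decomposable form in [hspan] to vanish.  So on
   an abelian subgroup f_i is, up to a coboundary, r a(x) a(y) / p for a single
   linear form a, the coboundary of a quadratic refinement.  Independence: a
   relation sum c_i f_i = dg inflates to a homomorphism Gt -> Q/Z, which kills
   the products of commutators generating H, hence sum c_i chi_i, so p | c_i. *)

From HB Require Import structures.
From mathcomp Require Import all_boot all_order all_algebra all_fingroup all_solvable.
From mathcomp Require Import ring zify.
Set Implicit Arguments. Unset Strict Implicit. Unset Printing Implicit Defensive.
Import GRing.Theory Num.Theory.

Section OuterProducts.
Variables (R : comNzRingType) (m : nat).
Local Open Scope ring_scope.

Definition upper_outer (v w : 'rV[R]_m) : 'M[R]_m :=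
  \matrix_(k, l) (if (k < l)%N then v 0 k * w 0 l else 0).

Lemma upper_outer0l w : upper_outer 0 w = 0.
Proof. by apply/matrixP=> k l; rewrite !mxE; case: ifP; rewrite ?mul0r. Qed.

Lemma upper_outer0r v : upper_outer v 0 = 0.
Proof. by apply/matrixP=> k l; rewrite !mxE; case: ifP; rewrite ?mulr0. Qed.

Definition wedge (v w : 'rV[R]_m) : 'M[R]_m := upper_outer v w - upper_outer w v.

Lemma wedgeE v w (k l : 'I_m) : (k < l)%N -> wedge v w k l = v 0 k * w 0 l - w 0 k * v 0 l.
Proof. by move=> lt_kl; rewrite !mxE lt_kl. Qed.

Definition erow (j : nat) : 'rV[R]_m := \row_k ((k : nat) == j)%:R.

Lemma upper_outer_erow a b (k l : 'I_m) :
  upper_outer (erow a) (erow b) k l = [&& (k < l)%N, k == a :> nat & l == b :> nat]%:R.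
Proof.
rewrite !mxE; case: (k < l)%N; case: (k == a :> nat); case: (l == b :> nat);
  by rewrite /= ?mul1r ?mul0r.
Qed.

Lemma upper_outer_erowK a : upper_outer (erow a) (erow a) = 0.
Proof.
apply/matrixP=> k l; rewrite upper_outer_erow mxE.
case: ltngtP => //= lt_kl; case: eqP => [ka|]; case: eqP => [la|] //=.
by move: lt_kl; rewrite ka la ltnn.
Qed.

Lemma wedge_erow a b (k l : 'I_m) : (a < b)%N -> (k < l)%N ->
  wedge (erow a) (erow b) k l = ((k == a :> nat) && (l == b :> nat))%:R.
Proof.
move=> lt_ab lt_kl; rewrite /wedge mxE upper_outer_erow mxE upper_outer_erow lt_kl.
by case: (k == b :> nat) /eqP => [kb|]; case: (l == a :> nat) /eqP => [la|] /=;
  rewrite ?subr0 //; lia.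
Qed.

Lemma wedge_plucker v w (a b c d : 'I_m) : (a < b < c)%N -> (c < d)%N ->
  let W := wedge v w in W a b * W c d - W a c * W b d + W a d * W b c = 0.
Proof. by move=> lt_abc lt_cd /=; rewrite !wedgeE; try lia; ring. Qed.

End OuterProducts.

Section Heisenberg.
Variables (R : finComNzRingType) (m : nat).
Local Open Scope ring_scope.
Local Notation upper_outer := (@upper_outer R m).
Local Notation wedge := (@wedge R m).

(* A central extension of R^m by m x m matrices whose commutator pairing is
   [wedge]. *)
Definition heis : Type := ('rV[R]_m * 'M[R]_m)%type.
HB.instance Definition _ := Finite.on heis.

Definition heis_mul (x y : heis) : heis := (x.1 + y.1, x.2 + y.2 + upper_outer x.1 y.1).
Definition heis_one : heis := (0, 0).
Definition heis_inv (x : heis) : heis := (- x.1, - x.2 + upper_outer x.1 x.1).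

Lemma heis_mulA : associative heis_mul.
Proof.
case=> [u A] [v B] [w C]; rewrite /heis_mul /=; congr (_, _); first by rewrite addrA.
by apply/matrixP=> k l; rewrite !mxE; case: ifP => _; ring.
Qed.

Lemma heis_mul1 : left_id heis_one heis_mul.
Proof. by case=> v A; rewrite /heis_mul /= upper_outer0l !add0r addr0. Qed.

Lemma heis_mulV : left_inverse heis_one heis_inv heis_mul.
Proof.
case=> v A; rewrite /heis_mul /heis_one /=; congr (_, _); first by rewrite addNr.
by apply/matrixP=> k l; rewrite !mxE; case: ifP => _; ring.
Qed.

HB.instance Definition _ := Finite_isGroup.Build heis heis_mulA heis_mul1 heis_mulV.

Local Open Scope group_scope.

Lemma heis_mulE (x y : heis) : x * y = ((x.1 + y.1)%R, (x.2 + y.2 + upper_outer x.1 y.1)%R).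
Proof. by []. Qed.

Lemma heis_invE (x : heis) : x^-1 = ((- x.1)%R, (- x.2 + upper_outer x.1 x.1)%R).
Proof. by []. Qed.

Lemma heis_oneE : (1 : heis) = (0%R, 0%R).
Proof. by []. Qed.

Lemma heis_mul_central (D E : 'M[R]_m) : ((0%R, D) : heis) * (0%R, E) = (0%R, (D + E)%R).
Proof. by rewrite heis_mulE /= upper_outer0l !addr0. Qed.

Lemma heis_pcomm (x y : heis) : pcomm x y = (0%R, wedge x.1 y.1).
Proof.
case: x y => [v A] [w B]; rewrite /pcomm !heis_mulE !heis_invE /=; congr (_, _).
  by rewrite (addrAC v) addrN add0r addrN.
by apply/matrixP=> k l; rewrite !mxE; case: ifP => _; ring.
Qed.

Lemma heis_central (x y : heis) : x.1 = 0%R -> commute x y.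
Proof.
case: x y => [v A] [w B] /= ->; rewrite /commute !heis_mulE /= upper_outer0l upper_outer0r.
by rewrite !addr0 !add0r addrC.
Qed.

Lemma heis_der1_center (K : {group heis}) : [~: K, K] \subset 'Z(K).
Proof.
rewrite gen_subG; apply/subsetP => _ /imset2P[x y Kx Ky ->].
apply/centerP; split=> [|z _]; first by rewrite groupR.
by apply: heis_central; apply/rowP => k; rewrite !mxE; ring.
Qed.

Lemma heis_expg_central (D : 'M[R]_m) k : ((0%R, D) : heis) ^+ k = (0%R, (D *+ k)%R).
Proof.
elim: k => [|k IHk]; first by rewrite expg0 heis_oneE mulr0n.
by rewrite expgS IHk heis_mul_central mulrS.
Qed.

Lemma heis_expg_row (v : 'rV[R]_m) k : upper_outer v v = 0%R ->
  ((v, 0%R) : heis) ^+ k = ((v *+ k)%R, 0%R).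
Proof.
move=> vv0; elim: k => [|k IHk]; first by rewrite expg0 heis_oneE mulr0n.
rewrite expgS IHk heis_mulE /= addr0 -mulrS; congr (_, _).
apply/matrixP=> i j; move/matrixP: vv0 => /(_ i j); rewrite !mxE.
by case: ifP => _ vv0; rewrite ?addr0 // add0r -scaler_nat !mxE mulrCA vv0 mulr0.
Qed.

End Heisenberg.

Section HSpan.
Variables (R : idomainType) (n : nat).
Local Notation m := n.+3.
Local Notation erow := (@erow R m).
Local Notation wedge := (@wedge R m).

Definition entry (N : 'M[R]_m) (k l : nat) : R := N (inord k) (inord l).

Lemma entry0 k l : entry 0 k l = 0%R.
Proof. by rewrite /entry mxE. Qed.

Lemma entryD (A B : 'M[R]_m) k l : entry (A + B) k l = (entry A k l + entry B k l)%R.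
Proof. by rewrite /entry mxE. Qed.

Lemma entryN (A : 'M[R]_m) k l : entry (- A) k l = (- entry A k l)%R.
Proof. by rewrite /entry mxE. Qed.

Lemma entry_upper_outer v w k l : (k < l < m)%N ->
  entry (upper_outer v w) k l = (v 0 (inord k) * w 0 (inord l))%R.
Proof. by move=> lt_klm; rewrite /entry mxE !inordK ?ifT //; lia. Qed.

Lemma entry_wedge v w k l : (k < l < m)%N ->
  entry (wedge v w) k l = (v 0 (inord k) * w 0 (inord l) - w 0 (inord k) * v 0 (inord l))%R.
Proof. by move=> lt_klm; rewrite /wedge entryD entryN !entry_upper_outer. Qed.

Definition hgen_mx (j : nat) : 'M[R]_m :=
  wedge (erow 0) (erow j.+1) + wedge (erow j.+2) (erow j.+3).

Lemma hgen_mxE j (k l : 'I_m) : (k < l)%N ->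
  hgen_mx j k l = (((k == 0 :> nat) && (l == j.+1 :> nat))%:R +
                   ((k == j.+2 :> nat) && (l == j.+3 :> nat))%:R)%R.
Proof. by move=> lt_kl; rewrite mxE !wedge_erow //; lia. Qed.

Lemma entry_hgen_mx (i j : 'I_n) : entry (hgen_mx j) 0 i.+1 = (i == j)%:R%R.
Proof. by have lt_in := ltn_ord i; rewrite /entry hgen_mxE !inordK ?eqSS ?addr0 //; lia. Qed.

(* A subspace containing every [hgen_mx j], cut out by linear conditions on the
   entries above the diagonal. *)
Definition hspan (N : 'M[R]_m) : bool :=
  [forall j : 'I_n, entry N j.+2 j.+3 == entry N 0 j.+1] &&
  [forall k : 'I_m, forall l : 'I_m,
     [&& (k < l)%N, ~~ ((k == 0 :> nat) && (l <= n)%N) & ~~ ((l == k.+1 :> nat) && (1 < k)%N)]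
     ==> (N k l == 0%R)].

Lemma hspan0 : hspan 0%R.
Proof.
apply/andP; split; apply/forallP=> j; rewrite /entry ?mxE //.
by apply/forallP=> l; rewrite mxE eqxx implybT.
Qed.

Lemma hspanD N N' : hspan N -> hspan N' -> hspan (N + N')%R.
Proof.
case/andP=> /forallP sN /forallP zN /andP[/forallP sN' /forallP zN'].
apply/andP; split; apply/forallP=> j.
  by move: (sN j) (sN' j); rewrite /entry !mxE => /eqP-> /eqP->.
apply/forallP=> l; apply/implyP=> jl; rewrite mxE.
have /forallP/(_ l)/implyP/(_ jl)/eqP-> := zN j.
by have /forallP/(_ l)/implyP/(_ jl)/eqP-> := zN' j; rewrite addr0.
Qed.

Lemma hspan_hgen j : (j < n)%N -> hspan (hgen_mx j).
Proof.
move=> lt_jn; apply/andP; split; apply/forallP=> i.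
  rewrite /entry !hgen_mxE !inordK; try (have := ltn_ord i; lia).
  by rewrite !eqSS andbb add0r addr0.
apply/forallP=> l; apply/implyP=> /and3P[lt_il i0 il]; rewrite hgen_mxE //.
have [-> ->] : ((i == 0 :> nat) && (l == j.+1 :> nat)) = false /\
    ((i == j.+2 :> nat) && (l == j.+3 :> nat)) = false.
  by split; apply/negbTE/andP => -[/eqP ei /eqP el]; move: i0 il; rewrite ei el; lia.
by rewrite addr0.
Qed.

Lemma hspan_shift N j : hspan N -> (j < n)%N -> entry N j.+2 j.+3 = entry N 0 j.+1.
Proof. by case/andP=> /forallP/(_ (Ordinal _))/eqP sN _ lt_jn; apply: sN. Qed.

Lemma hspan_zero N k l : hspan N -> (k < l < m)%N ->
  ~~ ((k == 0) && (l <= n))%N -> ~~ ((l == k.+1) && (1 < k))%N -> entry N k l = 0%R.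
Proof.
case/andP=> _ /forallP zN lt_klm k0 kl; have [lt_km lt_lm] : (k < m /\ l < m)%N by lia.
have /forallP/(_ (inord l))/implyP := zN (inord k); rewrite !inordK //.
by move/(_ _)/eqP; apply; apply/and3P; split; lia.
Qed.

Lemma hspan_wedge v w : hspan (wedge v w) ->
  forall j, (j < n)%N -> entry (wedge v w) 0 j.+1 = 0%R.
Proof.
set W := entry (wedge v w) => sW.
have plucker a b c d : (a < b < c)%N -> (c < d < m)%N ->
    (W a b * W c d - W a c * W b d + W a d * W b c = 0)%R.
  move=> lt_abc lt_cdm; have := @wedge_plucker _ _ v w (inord a) (inord b) (inord c) (inord d).
  by rewrite !inordK; try lia; apply; lia.
have step j : (j < n)%N -> W j.+1 j.+2 = 0%R -> W 0 j.+1 = 0%R.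
  move=> lt_jn W12; have := plucker 0 j.+1 j.+2 j.+3; rewrite /W in W12 *.
  rewrite hspan_shift // W12 (hspan_zero (k := j.+1) (l := j.+3)) //; try lia.
  rewrite !mulr0 subr0 addr0 -expr2 => /(_ _ _)/eqP; rewrite expf_eq0 /=.
  by move=> /(_ _ _)/eqP; apply; lia.
elim=> [|j IHj] lt_jn; apply: step => //.
  by apply: hspan_zero; try lia.
by rewrite /W hspan_shift -/W ?IHj //; lia.
Qed.

End HSpan.

Section HSpanGroup.
Variables (R : finIdomainType) (n : nat).

Definition hspan_set : {set heis R n.+3} := [set x | (x.1 == 0%R) && hspan x.2].

Lemma hspan_group_set : group_set hspan_set.
Proof.
apply/group_setP; split=> [|[v A] [w B]]; first by rewrite inE eqxx hspan0.
rewrite !inE /= => /andP[/eqP-> sA] /andP[/eqP-> sB].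
by rewrite upper_outer0l !addr0 eqxx hspanD.
Qed.

Canonical hspan_group := Group hspan_group_set.

End HSpanGroup.
Section Commutators.
Variable gT : finGroupType.
Local Open Scope ring_scope.
Local Open Scope group_scope.

Lemma pcomm_commg (x y : gT) : pcomm x y = [~ x^-1, y^-1].
Proof. by rewrite /pcomm /commg /conjg !invgK !mulgA. Qed.

Lemma pcomm_mem (G : {group gT}) x y : x \in G -> y \in G -> pcomm x y \in G.
Proof. by move=> Gx Gy; rewrite /pcomm !groupM ?groupV. Qed.

Lemma pcomm1 (x y : gT) : commute x y -> pcomm x y = 1.
Proof. by move=> cxy; rewrite /pcomm cxy mulgK mulgV. Qed.

Lemma morph_pcomm (rT : finGroupType) (D : {group gT}) (f : {morphism D >-> rT}) x y :
  x \in D -> y \in D -> f (pcomm x y) = pcomm (f x) (f y).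
Proof. by move=> Dx Dy; rewrite /pcomm !morphM ?groupM ?groupV // !morphV. Qed.

Lemma repr_quotient_mem (H G : {group gT}) (x : coset_of H) :
  H <| G -> x \in G / H -> repr x \in G.
Proof.
move=> nsHG Gx; rewrite -(quotientGK nsHG).
by apply/morphpreP; split; [exact: repr_coset_norm | rewrite /= coset_reprK].
Qed.

Lemma bicyclic_abelian (A : {group gT}) : bicyclic A -> abelian A.
Proof.
case=> [/cyclic_abelian // | [B [C [cB cC /dprodP[_ <- cBC _]]]]].
by rewrite abelianM !cyclic_abelian.
Qed.

Section QZMorphism.
Variables (G : {group gT}) (theta : gT -> rat).
Hypothesis thetaM : {in G &, forall a b, qz_zero (theta (a * b) - theta a - theta b)}.

Lemma qz_morph1 : qz_zero (theta 1).
Proof.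
have -> : theta 1 = - (theta (1 * 1) - theta 1 - theta 1) by rewrite mulg1; ring.
by rewrite /qz_zero rpredN; apply: thetaM.
Qed.

Lemma qz_morph_pcomm : {in G &, forall a b, qz_zero (theta (pcomm a b))}.
Proof.
move=> a b Ga Gb; have theta1 := qz_morph1.
have thetaV c : c \in G -> qz_zero (theta c^-1 + theta c).
  move=> Gc; have -> : theta c^-1 + theta c = theta 1 - (theta (c^-1 * c) - theta c^-1 - theta c).
    by rewrite mulVg; ring.
  by apply: rpredB => //; apply: thetaM; rewrite ?groupV.
have -> : theta (pcomm a b) =
    ((theta (a * b * a^-1 * b^-1) - theta (a * b * a^-1) - theta b^-1) +
     (theta (a * b * a^-1) - theta (a * b) - theta a^-1) + (theta (a * b) - theta a - theta b) +
     (theta a^-1 + theta a) + (theta b^-1 + theta b)) by rewrite /pcomm; ring.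
have h1 := thetaM (groupM (groupM Ga Gb) (groupVr Ga)) (groupVr Gb).
have h2 := thetaM (groupM Ga Gb) (groupVr Ga).
exact: rpredD (rpredD (rpredD (rpredD h1 h2) (thetaM Ga Gb)) (thetaV _ Ga)) (thetaV _ Gb).
Qed.

End QZMorphism.

End Commutators.

Lemma parallel_ratio (F : fieldType) (T : finType) (P : {pred T}) (s t : T -> F) :
  {in P &, forall x y, s x * t y = s y * t x}%R ->
  exists r, {in P &, forall x y, s x * t y = r * s x * s y}%R.
Proof.
move=> st; case: (pickP [pred x in P | s x != 0%R]) => [x0 /andP[Px0 sx0] | s0].
  exists (t x0 / s x0)%R => x y Px Py; have ty : t y = (s y * t x0 / s x0)%R.
    by rewrite -st // [(s x0 * _)%R]mulrC mulfK.
  by rewrite ty; field.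
by exists 0%R => x y Px _; have := s0 x; rewrite /= Px => /negbFE/eqP->; rewrite !mul0r.
Qed.

Section Coboundary.
Variables (aT : finGroupType) (A : {set aT}).
Local Open Scope ring_scope.

Lemma coboundary2_eqZ (f f' : aT -> aT -> rat) :
  (forall x y, x \in A -> y \in A -> qz_zero (f x y - f' x y)) ->
  coboundary2 A f' -> coboundary2 A f.
Proof.
move=> ff' [g hg]; exists g => x y Ax Ay.
by rewrite -(subrK (f' x y) (f x y)) -addrA; apply: rpredD; [apply: ff' | apply: hg].
Qed.

Lemma coboundary2D (f f' : aT -> aT -> rat) :
  coboundary2 A f -> coboundary2 A f' -> coboundary2 A (fun x y => f x y + f' x y).
Proof.
move=> [g hg] [g' hg']; exists (fun x => g x + g' x) => x y Ax Ay.
have -> : f x y + f' x y - (g x + g' x + (g y + g' y) - (g (x * y)%g + g' (x * y)%g)) =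
  (f x y - (g x + g y - g (x * y)%g)) + (f' x y - (g' x + g' y - g' (x * y)%g)) by ring.
by apply: rpredD; [apply: hg | apply: hg'].
Qed.

Lemma coboundary2Mn (k : nat) (f : aT -> aT -> rat) :
  coboundary2 A f -> coboundary2 A (fun x y => k%:R * f x y).
Proof.
move=> [g hg]; exists (fun x => k%:R * g x) => x y Ax Ay.
rewrite -mulrDr -mulrBr -mulrBr; apply: rpredM; [exact: natr_int | exact: hg].
Qed.

End Coboundary.

Section FpLift.
Variable p : nat.
Hypothesis pr_p : prime p.
Local Open Scope ring_scope.

Definition qlift (a : 'F_p) : rat := (a : nat)%:R / p%:R.

Lemma natrp_neq0 : (p%:R : rat) != 0.
Proof. by rewrite pnatr_eq0 -lt0n prime_gt0. Qed.

Lemma val_Fp_lt (a : 'F_p) : (a < p)%N.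
Proof. by rewrite -[p in (_ < p)%N](card_Fp pr_p) card_ord ltn_ord. Qed.

Lemma qlift_natr k : qz_zero (qlift k%:R - k%:R / p%:R).
Proof.
rewrite /qlift val_Fp_nat // {2}(divn_eq k p) natrD natrM mulrDl mulfK ?natrp_neq0 //.
by rewrite opprD addrCA subrr addr0 /qz_zero rpredN natr_int.
Qed.

Lemma qlift_add a b : qz_zero (qlift (a + b) - qlift a - qlift b).
Proof.
have := qlift_natr (a + b); rewrite natrD !natr_Zp.
by rewrite /qlift natrD mulrDl opprD addrA.
Qed.

Lemma qlift_add3 a b c : qz_zero (qlift (a + b + c) - qlift a - qlift b - qlift c).
Proof.
have -> : qlift (a + b + c) - qlift a - qlift b - qlift c =
  (qlift (a + b + c) - qlift (a + b) - qlift c) + (qlift (a + b) - qlift a - qlift b) by ring.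
exact: rpredD (qlift_add _ _) (qlift_add _ _).
Qed.

Lemma qlift_mull (r a : 'F_p) : qz_zero (qlift (r * a) - (r : nat)%:R * qlift a).
Proof. by have := qlift_natr (r * a); rewrite !natrM !natr_Zp {2}/qlift mulrA. Qed.

Lemma qlift0 : qlift 0 = 0.
Proof. by rewrite /qlift mul0r. Qed.

Lemma qlift1 : qlift 1 = 1 / p%:R.
Proof. by rewrite /qlift -[X in nat_of_ord X]mulr1n val_Fp_nat // modn_small ?prime_gt1. Qed.

Lemma qlift_mulp a : qz_zero (p%:R * qlift a).
Proof. by rewrite /qlift mulrC mulfVK ?natrp_neq0 //; exact: natr_int. Qed.

Lemma dvdn_qz_natr k : qz_zero (k%:R / p%:R) -> (p %| k)%N.
Proof.
case/intrP=> z hz; have hk : k%:Z = z * p.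
  by apply: (@intr_inj rat); rewrite intrM -hz mulfVK ?natrp_neq0.
by rewrite -(@dvdzE p k) /= hk dvdz_mull.
Qed.

Lemma qlift_cocycle (aT : finGroupType) (G : {set aT}) (c : aT -> aT -> 'F_p) :
  (forall x y z, x \in G -> y \in G -> z \in G ->
     c y z - c (x * y)%g z + c x (y * z)%g - c x y = 0) ->
  cocycle2 G (fun x y => qlift (c x y)).
Proof.
move=> cc x y z Gx Gy Gz; have := cc x y z Gx Gy Gz.
move: (c y z) (c (x * y)%g z) (c x (y * z)%g) (c x y) => a b d e abde.
have ad : a + d = b + e by apply/eqP; rewrite -subr_eq0 -abde; apply/eqP; ring.
have -> : qlift a - qlift b + qlift d - qlift e =
  (qlift (b + e) - qlift b - qlift e) - (qlift (a + d) - qlift a - qlift d) by rewrite ad; ring.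
exact: rpredB (qlift_add b e) (qlift_add a d).
Qed.

Lemma qlift_coboundary (aT : finGroupType) (A : {set aT}) (g : aT -> 'F_p) :
  coboundary2 A (fun x y => qlift (g x + g y - g (x * y)%g)).
Proof.
exists (fun x => qlift (g x)) => x y _ _; move: (g x) (g y) (g (x * y)%g) => u v w.
have -> : qlift (u + v - w) - (qlift u + qlift v - qlift w) =
  (qlift (u + v) - qlift u - qlift v) - (qlift (u + v - w + w) - qlift (u + v - w) - qlift w).
  by rewrite subrK; ring.
exact: rpredB (qlift_add _ _) (qlift_add _ _).
Qed.

(* The summand [p x] makes [qform] well defined on residues mod p modulo Z
   (also for p = 2): it is a quadratic refinement of (x, y) |-> x y / p. *)
Definition qform (x : nat) : rat := (x ^ 2 + p * x)%:R / (2 * p)%:R.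

Lemma qform_add (a b : 'F_p) :
  qz_zero (qform (a + b)%R - qform a - qform b - (a : nat)%:R * qlift b).
Proof.
set u := (a : nat); set v := (b : nat); set w := ((a + b)%R : nat).
have p0 := natrp_neq0.
have [e [q01 hq]] : exists e : nat, (e < 2)%N /\ (u + v = e * p + w)%N.
  exists ((u + v) %/ p)%N; split.
    rewrite ltn_divLR ?prime_gt0 //; have := val_Fp_lt a; have := val_Fp_lt b; lia.
  by rewrite {1}(divn_eq (u + v)%N p) /w -val_Fp_nat // natrD !natr_Zp.
have hr : (w%:R : rat) = u%:R + v%:R - e%:R * p%:R by rewrite -natrM -natrD hq; ring.
have -> : qform w - qform u - qform v - u%:R * qlift b = - (e%:R * (u%:R + v%:R)) +
    (e%:R * e%:R - e%:R) / 2%:R * p%:R.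
  by rewrite /qform /qlift !(natrD, natrM, natrX) hr; field; rewrite p0 ?pnatr_eq0.
case: e q01 {hq hr} => [|[|//]] _; rewrite /qz_zero.
  by rewrite [X in X \is a _](_ : _ = 0) ?rpred0 //; ring.
by rewrite [X in X \is a _](_ : _ = - (u + v)%:R) ?rpredN ?natr_int // natrD; ring.
Qed.

Lemma qlift_mul_coboundary (aT : finGroupType) (A : {group aT}) (g : aT -> 'F_p) :
  {in A &, {morph g : x y / (x * y)%g >-> x + y}} ->
  coboundary2 A (fun x y => qlift (g x * g y)).
Proof.
move=> gM; exists (fun x => - qform (g x)) => x y Ax Ay; rewrite gM //.
have -> : qlift (g x * g y) - (- qform (g x) + - qform (g y) - - qform (g x + g y)%R) =
  (qlift (g x * g y) - (g x : nat)%:R * qlift (g y)) -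
  (qform (g x + g y)%R - qform (g x) - qform (g y) - (g x : nat)%:R * qlift (g y)) by ring.
exact: rpredB (qlift_mull _ _) (qform_add _ _).
Qed.

End FpLift.


Section SchurCoverQuotient.
Local Open Scope group_scope.
Variables (p n : nat) (gT : finGroupType) (Gt : {group gT}) (sigma : nat -> gT).
Hypothesis pr_p : prime p.
Hypothesis n_gt0 : (0 < n)%N.
Hypothesis Gt_gen : Gt :=: <<gens_set (n + 3) sigma>>.
Hypothesis ZGt : 'Z(Gt) = [~: Gt, Gt].
Local Notation m := n.+3.
Local Notation erow := (erow 'F_p m).
Local Notation hgen_mx := (@hgen_mx 'F_p n).
Variable F : {morphism Gt >-> heis 'F_p m}.
Hypothesis F_sigma : forall k, (0 < k <= n + 3)%N -> F (sigma k) = (erow k.-1, 0%R).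
Local Notation H := (Hsub n sigma).

Lemma sigma_in k : (0 < k <= n + 3)%N -> sigma k \in Gt.
Proof.
case: k => // k lt_km; rewrite Gt_gen mem_gen //.
by apply/imsetP; exists (Ordinal lt_km).
Qed.

Lemma pcomm_center x y : x \in Gt -> y \in Gt -> pcomm x y \in 'Z(Gt).
Proof. by move=> Gx Gy; rewrite ZGt pcomm_commg mem_commg ?groupV. Qed.

Definition hgen (j : nat) : gT :=
  pcomm (sigma 1) (sigma j.+2) * pcomm (sigma j.+3) (sigma j.+4).

Lemma H_gensE : H_gens n sigma = [set hgen j | j : 'I_n].
Proof.
apply/setP=> h; apply/setU1P/imsetP => [[->|/imsetP[t _ ->]]|[[[|j] lt_jn] _ ->]].
- by exists (Ordinal n_gt0).
- have lt_tn : ((t : nat).+1 < n)%N by rewrite -ltn_predRL.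
  by exists (Ordinal lt_tn); rewrite // /hgen !addnS addn0.
- by left.
- right; apply/imsetP; have lt_jn' : (j < n.-1)%N by rewrite ltn_predRL.
  by exists (Ordinal lt_jn'); rewrite // /hgen !addnS addn0.
Qed.

Lemma hgen_pcomms j : (j < n)%N ->
  exists a b c d, [/\ a \in Gt, b \in Gt, c \in Gt, d \in Gt & hgen j = pcomm a b * pcomm c d].
Proof.
move=> lt_jn; exists (sigma 1), (sigma j.+2), (sigma j.+3), (sigma j.+4).
by rewrite !sigma_in; try lia.
Qed.

Lemma F_hgen j : (j < n)%N -> F (hgen j) = (0%R, hgen_mx j).
Proof.
move=> lt_jn; have Gs k : (0 < k <= n + 3)%N -> sigma k \in Gt := @sigma_in k.
rewrite /hgen morphM ?pcomm_mem ?Gs; try lia.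
rewrite !morph_pcomm ?Gs; try lia.
rewrite !F_sigma; try lia.
by rewrite !heis_pcomm heis_mul_central.
Qed.

Lemma H_center : H \subset 'Z(Gt).
Proof.
rewrite /Hsub H_gensE gen_subG; apply/subsetP=> _ /imsetP[j _ ->].
by have [a [b [c [d [Ga Gb Gc Gd ->]]]]] := hgen_pcomms (ltn_ord j); rewrite groupM ?pcomm_center.
Qed.

Lemma H_normal : H <| Gt.
Proof. exact: sub_center_normal H_center. Qed.

Lemma F_H h : h \in H -> (F h).1 = 0%R /\ hspan (F h).2.
Proof.
have: H \subset F @*^-1 hspan_group 'F_p n.
  rewrite /Hsub H_gensE gen_subG; apply/subsetP=> _ /imsetP[j _ ->].
  have [a [b [c [d [Ga Gb Gc Gd hgenE]]]]] := hgen_pcomms (ltn_ord j).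
  have Gj : hgen j \in Gt by rewrite hgenE groupM ?pcomm_mem.
  by rewrite mem_morphpre // F_hgen // inE eqxx hspan_hgen.
by move/subsetP=> sHK /sHK; rewrite morphpreE !inE => /andP[_ /andP[/eqP-> ->]].
Qed.

Definition vrep (x : coset_of H) : 'rV['F_p]_m := (F (repr x)).1.
Definition mrep (x : coset_of H) : 'M['F_p]_m := (F (repr x)).2.

Lemma repr_mem x : x \in Gt / H -> repr x \in Gt.
Proof. exact: repr_quotient_mem H_normal. Qed.

Lemma F1_coset a b : a \in Gt -> b \in Gt -> coset H a = coset H b -> (F a).1 = (F b).1.
Proof.
move=> Ga Gb eab; have nHG := normal_norm H_normal.
have Hab : a * b^-1 \in H.
  apply: coset_idr; first by rewrite (subsetP nHG) ?groupM ?groupV.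
  by rewrite morphM ?morphV ?groupV ?(subsetP nHG) //= eab mulgV.
have -> : F a = F (a * b^-1) * F b by rewrite -morphM ?groupM ?groupV // mulgKV.
by rewrite heis_mulE (F_H Hab).1 add0r.
Qed.

Lemma vrepE a : a \in Gt -> vrep (coset H a) = (F a).1.
Proof.
move=> Ga; apply: F1_coset; rewrite ?coset_reprK //.
exact/repr_mem/mem_quotient.
Qed.

Lemma vrepM : {in Gt / H &, {morph vrep : x y / x * y >-> (x + y)%R}}.
Proof.
move=> x y Gx Gy; have [Gx' Gy'] := (repr_mem Gx, repr_mem Gy).
rewrite -[x]coset_reprK -[y]coset_reprK -morphM ?repr_coset_norm //.
by rewrite !vrepE ?groupM // morphM.
Qed.

Definition vcoord (k : nat) (x : coset_of H) : 'F_p := vrep x 0%R (inord k).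
Definition mcoord (k : nat) (x : coset_of H) : 'F_p := entry (mrep x) 0 k.

Lemma vcoordM k : {in Gt / H &, {morph vcoord k : x y / x * y >-> (x + y)%R}}.
Proof. by move=> x y Gx Gy; rewrite /vcoord vrepM // mxE. Qed.

(* The (0, i+1) entry of F (repr x * repr y * (repr (x * y))^-1), which lies in
   F @* H: the transgression of the i-th coordinate character of H. *)
Definition ext_cocycle (i : 'I_n) (x y : coset_of H) : 'F_p :=
  (mcoord i.+1 x + mcoord i.+1 y - mcoord i.+1 (x * y) + vcoord 0 x * vcoord i.+1 y)%R.

Definition b0_cocycle (i : 'I_n) (x y : coset_of H) : rat := qlift (ext_cocycle i x y).

Lemma b0_cocycle_cocycle i : cocycle2 (Gt / H) (b0_cocycle i).
Proof.
apply: (qlift_cocycle pr_p) => x y z Gx Gy Gz.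
by rewrite /ext_cocycle !vcoordM ?groupM // mulgA; ring.
Qed.

Lemma b0_cocycle_p_coboundary i : coboundary2 (Gt / H) (fun x y => p%:R * b0_cocycle i x y)%R.
Proof.
exists (fun=> 0%R) => x y _ _; rewrite !subrr subr0.
exact: qlift_mulp pr_p _.
Qed.

Lemma vcoord_commute x y (i : 'I_n) : x \in Gt / H -> y \in Gt / H -> commute x y ->
  (vcoord 0 x * vcoord i.+1 y = vcoord 0 y * vcoord i.+1 x)%R.
Proof.
move=> Gx Gy cxy; have [Gx' Gy'] := (repr_mem Gx, repr_mem Gy).
have Hc : pcomm (repr x) (repr y) \in H.
  apply: coset_idr; first by rewrite (subsetP (normal_norm H_normal)) ?pcomm_mem.
  by rewrite morph_pcomm ?repr_coset_norm //= !coset_reprK pcomm1.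
have := (F_H Hc).2; rewrite morph_pcomm // heis_pcomm => /hspan_wedge/(_ i (ltn_ord i)).
have lt_in := ltn_ord i; rewrite entry_wedge; try lia.
by move=> /eqP; rewrite subr_eq0 => /eqP.
Qed.

Lemma b0_cocycle_abelian_coboundary i (A : {group coset_of H}) :
  A \subset Gt / H -> abelian A -> coboundary2 A (b0_cocycle i).
Proof.
move=> sAG cAA; have GA x : x \in A -> x \in Gt / H := subsetP sAG x.
have [r hr] : exists r,
    {in A &, forall x y, vcoord 0 x * vcoord i.+1 y = r * vcoord 0 x * vcoord 0 y}%R.
  by apply: parallel_ratio => x y Ax Ay; apply: vcoord_commute; rewrite ?GA //; exact: (centsP cAA).
set g := mcoord i.+1; set s := vcoord 0.
apply: (@coboundary2_eqZ _ _ _ (fun x y =>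
  qlift (g x + g y - g (x * y)%g) + (r : nat)%:R * qlift (s x * s y))%R).
  move=> x y Ax Ay; rewrite /b0_cocycle /ext_cocycle hr // -mulrA -/g -/s.
  move: (g x + g y - g (x * y)%g)%R (s x * s y)%R => u w.
  have -> : (qlift (u + r * w) - (qlift u + (r : nat)%:R * qlift w) =
    (qlift (u + r * w) - qlift u - qlift (r * w)) + (qlift (r * w) - (r : nat)%:R * qlift w))%R.
    by ring.
  exact: rpredD (qlift_add pr_p _ _) (qlift_mull pr_p _ _).
apply: coboundary2D; first exact: qlift_coboundary.
apply/coboundary2Mn/(qlift_mul_coboundary pr_p) => x y Ax Ay.
exact: vcoordM (GA _ Ax) (GA _ Ay).
Qed.

Section Independence.
Variables (c : 'I_n -> nat) (g : coset_of H -> rat).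
Hypothesis cg : forall x y, x \in Gt / H -> y \in Gt / H ->
  qz_zero (\sum_(i < n) (c i)%:R * b0_cocycle i x y - (g x + g y - g (x * y)%g))%R.

(* The inflation of the relation sum c_i f_i = dg: a homomorphism Gt -> Q/Z
   that restricts to sum c_i chi_i on H. *)
Definition theta (a : gT) : rat :=
  (\sum_(i < n) (c i)%:R * qlift (entry (F a).2 0 i.+1 - mcoord i.+1 (coset H a)) +
   g (coset H a))%R.

Lemma F_entry_mul (i : 'I_n) a b : a \in Gt -> b \in Gt ->
  (entry (F (a * b)%g).2 0 i.+1 - mcoord i.+1 (coset H a * coset H b)%g =
   (entry (F a).2 0 i.+1 - mcoord i.+1 (coset H a)) +
   (entry (F b).2 0 i.+1 - mcoord i.+1 (coset H b)) + ext_cocycle i (coset H a) (coset H b))%R.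
Proof.
move=> Ga Gb; have lt_in := ltn_ord i.
rewrite morphM // heis_mulE /= !entryD entry_upper_outer; last by lia.
by rewrite -!vrepE // /ext_cocycle /vcoord; ring.
Qed.

Lemma thetaM : {in Gt &, forall a b, qz_zero (theta (a * b)%g - theta a - theta b)%R}.
Proof.
move=> a b Ga Gb; rewrite /theta.
have -> : coset H (a * b) = coset H a * coset H b.
  by rewrite morphM ?(subsetP (normal_norm H_normal)).
under eq_bigr => i _ do rewrite F_entry_mul //.
set x := coset H a; set y := coset H b.
have -> : forall (X Y C : 'I_n -> 'F_p),
  (\sum_(i < n) (c i)%:R * qlift (X i + Y i + C i) + g (x * y)%g -
    (\sum_(i < n) (c i)%:R * qlift (X i) + g x) - (\sum_(i < n) (c i)%:R * qlift (Y i) + g y) =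
  \sum_(i < n) (c i)%:R * (qlift (X i + Y i + C i) - qlift (X i) - qlift (Y i) - qlift (C i)) +
  (\sum_(i < n) (c i)%:R * qlift (C i) - (g x + g y - g (x * y)%g)))%R.
  move=> X Y C; under [in RHS]eq_bigr => i _ do rewrite !mulrBr.
  by rewrite !sumrB; ring.
apply: rpredD; last exact: cg (mem_quotient _ Ga) (mem_quotient _ Gb).
by apply: rpred_sum => i _; apply: rpredM; [exact: natr_int | exact: qlift_add3].
Qed.

Lemma theta_H h : h \in H ->
  qz_zero (theta h - theta 1 - \sum_(i < n) (c i)%:R * qlift (entry (F h).2 0 i.+1))%R.
Proof.
move=> Hh; have F1 : (F 1).2 = 0%R by rewrite morph1.
rewrite /theta coset_id // F1 morph1.
set S1 := (\sum_(i < n) (c i)%:R * qlift (entry 0 0 i.+1 - _))%R.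
have -> : S1 = (\sum_(i < n) (c i)%:R * qlift (- mcoord i.+1 1))%R.
  by apply: eq_bigr => i _; rewrite entry0 sub0r.
have -> : forall (E M : 'I_n -> 'F_p),
  (\sum_(i < n) (c i)%:R * qlift (E i - M i) + g 1 - (\sum_(i < n) (c i)%:R * qlift (- M i) + g 1) -
    \sum_(i < n) (c i)%:R * qlift (E i) =
  \sum_(i < n) (c i)%:R * (qlift (E i + - M i) - qlift (E i) - qlift (- M i)))%R.
  by move=> E M; under [in RHS]eq_bigr => i _ do rewrite !mulrBr; rewrite !sumrB; ring.
by apply: rpred_sum => i _; apply: rpredM; [exact: natr_int | exact: qlift_add].
Qed.

Lemma dvdn_b0_coeff j : (p %| c j)%N.
Proof.
have [a [b [d [e [Ga Gb Gd Ge hgenE]]]]] := hgen_pcomms (ltn_ord j).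
have thetaP := qz_morph_pcomm thetaM.
have theta_hgen : qz_zero (theta (hgen j)).
  rewrite hgenE; set u := pcomm a b; set w := pcomm d e.
  have -> : theta (u * w)%g = (theta (u * w)%g - theta u - theta w + theta u + theta w)%R by ring.
  have [Gu Gw] : u \in Gt /\ w \in Gt by rewrite !pcomm_mem.
  exact: rpredD (rpredD (thetaM Gu Gw) (thetaP _ _ Ga Gb)) (thetaP _ _ Gd Ge).
have Hj : hgen j \in H by rewrite mem_gen // H_gensE; apply/imsetP; exists j.
have := rpredB (rpredB theta_hgen (qz_morph1 thetaM)) (theta_H Hj).
rewrite opprB addrC subrK F_hgen //=.
rewrite (bigD1 j) //= big1 => [|i nij]; last by rewrite entry_hgen_mx (negbTE nij) qlift0 mulr0.
by rewrite entry_hgen_mx eqxx addr0 mulr1n (qlift1 pr_p) mul1r => /(dvdn_qz_natr pr_p).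
Qed.

End Independence.

Lemma B0_quotient_contains : B0_contains_Zp_pow (Gt / H)%G p n.
Proof.
exists b0_cocycle; split=> [i | i | c [g cg] j]; last exact: dvdn_b0_coeff cg j.
  split=> [|A sAG /bicyclic_abelian cAA]; first exact: b0_cocycle_cocycle.
  exact: b0_cocycle_abelian_coboundary.
exact: b0_cocycle_p_coboundary.
Qed.

End SchurCoverQuotient.

Local Open Scope group_scope.

Theorem theorem5p2 (p n : nat) (gT : finGroupType) (Gt : {group gT}) (sigma : nat -> gT) :
  prime p -> (0 < n)%N ->
  Gt :=: <<gens_set (n + 3) sigma>> ->
  'Z(Gt) = [~: Gt, Gt] ->
  (forall i, (0 < i <= n + 3)%N -> sigma i ^+ p = 1) ->
  (forall i j, (0 < i)%N -> (i < j <= n + 3)%N -> pcomm (sigma i) (sigma j) ^+ p = 1) ->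
  (forall (hT : finGroupType) (tau : nat -> hT),
     (forall i, (0 < i <= n + 3)%N -> tau i ^+ p = 1) ->
     (forall i j, (0 < i)%N -> (i < j <= n + 3)%N -> pcomm (tau i) (tau j) ^+ p = 1) ->
     [~: <<gens_set (n + 3) tau>>, <<gens_set (n + 3) tau>>]
        \subset 'Z(<<gens_set (n + 3) tau>>) ->
     exists f : {morphism Gt >-> hT},
       forall i, (0 < i <= n + 3)%N -> f (sigma i) = tau i) ->
  B0_contains_Zp_pow (Gt / Hsub n sigma)%G p n.
Proof.
move=> pr_p n_gt0 Gt_gen ZGt _ _ univ.
pose tau k : heis 'F_p n.+3 := (erow 'F_p n.+3 k.-1, 0%R).
have charp k (A : 'M['F_p]_(k, n.+3)) : (A *+ p)%R = 0%R.
  by rewrite -scaler_nat (pchar_Fp_0 pr_p) scale0r.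
have [F F_sigma] : exists F : {morphism Gt >-> heis 'F_p n.+3},
    forall k, (0 < k <= n + 3)%N -> F (sigma k) = tau k.
  apply: univ => [k _ | k l _ _ |]; last exact: heis_der1_center.
    by rewrite heis_expg_row ?upper_outer_erowK // charp.
  by rewrite heis_pcomm heis_expg_central charp.
exact: (@B0_quotient_contains _ _ _ _ _ pr_p n_gt0 Gt_gen ZGt F F_sigma).
Qed.
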